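(* In any finite ELP, for any policy $\pi$ (the conjugate policy), $Q^*\in\arg\min_{Q\in\mathcal Q}\max_{\lambda\ge0}\mathcal L_\pi(Q,\lambda)$. Equivalently, $Q^*$ is an optimal solution of the problem: minimize $\mathbb E_\pi[Q(S_T,A_T)]$ over $Q\in\mathcal Q$ subject to $Q(s,a)\ge\mathcal BQ(s,a)$ for all $(s,a)$.
   Context: A finite ELP is $(\mathcal S,\mathcal A,P,R,\rho)$ with finite $\mathcal S,\mathcal A$, reward $R:\mathcal S\to\mathbb R$, transitions $P(s'|s,a)$, distribution $\rho$, and nonempty terminal set $\mathcal S_\bot$. Under a policy $\pi$, $S_0$ is a fixed terminal state, $A_t\sim\pi(\cdot|S_t)$, $S_{t+1}\sim P(\cdot|S_t,A_t)$, and $T=\inf\{t\ge1:S_t\in\mathcal S_\bot\}$. ELP conditions: $\mathbb E_\pi[T]<\infty$ for every $\pi$; $P(s'|s,a)=\rho(s')$ for all $s\in\mathcal S_\bot$, all $a,s'$; every state is reachable under some policy. $\mathcal Q$ = all functions $\mathcal S\times\mathcal A\to\mathbb R$. $\gamma_{\mathrm{epi}}(s)=\mathbf 1[s\notin\mathcal S_\bot]$; the Bellman operator is $\mathcal BQ(s,a)=\sum_{s'}P(s'|s,a)\big(R(s')+\gamma_{\mathrm{epi}}(s')\max_{a'}Q(s',a')\big)$, and $Q^*$ is its unique fixed point. For a policy $\pi$, the Lagrangian is $\mathcal L_\pi(Q,\lambda)=\mathbb E_\pi[Q(S_T,A_T)]+\sum_{s,a}\lambda(s,a)\big(\mathcal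 BQ(s,a)-Q(s,a)\big)$ for $Q\in\mathcal Q$ and $\lambda:\mathcal S\times\mathcal A\to[0,\infty)$ (written $\lambda\ge0$), where $A_T\sim\pi(\cdot|S_T)$. *)

From HB Require Import structures.
From mathcomp Require Import all_boot all_order all_algebra.
From mathcomp Require Import all_classical all_reals all_analysis.
Set Implicit Arguments. Unset Strict Implicit. Unset Printing Implicit Defensive.
Import Order.TTheory GRing.Theory Num.Theory.
Local Open Scope ring_scope.
Import numFieldNormedType.Exports.
Local Open Scope classical_set_scope.

Section ELP.
Variables (R : realType) (S A : finType).

Definition is_distr (T : finType) (p : T -> R) : Prop :=
  (forall x, 0 <= p x) /\ \sum_(x : T) p x = 1.

Definition is_policy (pi : S -> A -> R) : Prop := forall s, is_distr (pi s).

Variables (P : S -> A -> S -> R) (Rw : S -> R) (rho : S -> R) (Sbot : {set S}).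

(* dist pi n s = Pr_pi(S_{n+1} = s, T >= n+1), the law of the state at time n+1
   restricted to trajectories that have not terminated before time n+1.
   S_0 is terminal, so S_1 ~ P(.|S_0,A_0) = rho. *)
Fixpoint dist (pi : S -> A -> R) (n : nat) : S -> R :=
  match n with
  | 0 => rho
  | n'.+1 => fun s' =>
      \sum_(s : S | s \notin Sbot) dist pi n' s * \sum_(a : A) pi s a * P s a s'
  end.

(* Pr_pi(T >= n+1) *)
Definition survival (pi : S -> A -> R) (n : nat) : R := \sum_(s : S) dist pi n s.

(* E_pi[T] < oo : E_pi[T] = sum_{n>=0} Pr(T >= n+1) is a convergent series *)
Definition finite_expected_T (pi : S -> A -> R) : Prop := cvgn (series (survival pi)).

(* Pr_pi(S_T = s) for s terminal : sum_{n>=0} Pr(T = n+1, S_{n+1} = s) *)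
Definition hitting_prob (pi : S -> A -> R) (s : S) : R :=
  if s \in Sbot then limn (series (fun n => dist pi n s)) else 0.

(* E_pi[Q(S_T, A_T)], A_T ~ pi(.|S_T) *)
Definition EQT (pi : S -> A -> R) (Q : S -> A -> R) : R :=
  \sum_(s : S) hitting_prob pi s * \sum_(a : A) pi s a * Q s a.

Definition is_ELP : Prop :=
  [/\ Sbot != finset.set0,
      (forall s a, is_distr (P s a)) /\ is_distr rho,
      (forall pi, is_policy pi -> finite_expected_T pi),
      (forall s a s', s \in Sbot -> P s a s' = rho s') &
      (forall s, exists pi, is_policy pi /\ exists n, 0 < dist pi n s)].

(* max_{a'} f a' over the finite action set (0 if A were empty) *)
Definition maxA (f : A -> R) : R :=
  match [pick a : A] with
  | Some a0 => \big[Num.max/f a0]_(a : A) f a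
  | None => 0
  end.

Definition gamma_epi (s : S) : R := if s \in Sbot then 0 else 1.

Definition bellman (Q : S -> A -> R) : S -> A -> R := fun s a =>
  \sum_(s' : S) P s a s' * (Rw s' + gamma_epi s' * maxA (Q s')).

Definition lagrangian (pi : S -> A -> R) (Q lam : S -> A -> R) : R :=
  EQT pi Q + \sum_(s : S) \sum_(a : A) lam s a * (bellman Q s a - Q s a).

Definition maxLag (pi : S -> A -> R) (Q : S -> A -> R) : \bar R :=
  ereal_sup [set (lagrangian pi Q lam)%:E |
               lam in [set lam : S -> A -> R | forall s a, 0 <= lam s a]].

End ELP.

From Pilot Require Import Defs.
From HB Require Import structures.
From mathcomp Require Import all_boot all_order all_algebra.
From mathcomp Require Import all_classical all_reals all_analysis.
Import Order.TTheory GRing.Theory Num.Theory numFieldNormedType.Exports.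
Set Implicit Arguments. Unset Strict Implicit. Unset Printing Implicit Defensive.
Local Open Scope ring_scope.

(* Let Q satisfy Q >= BQ.  If D = Q* - Q had a positive maximum M, then, along
   the greedy actions of Q*, the states where D attains M (discounted by the
   terminal indicator) are non-terminal and form a set that is closed under the
   transitions and reached with positive probability; a policy that stays
   greedy there never terminates with positive probability, contradicting
   E[T] < oo.  Hence Q* <= Q pointwise, so Q* minimises the monotone objective
   E_pi[Q(S_T,A_T)] over the feasible set, while for infeasible Q a single
   violated constraint makes the Lagrangian unbounded in lambda. *)

Section FiniteMax.
Variables (R : realType) (A : finType).

Lemma maxA_ge (f : A -> R) a : f a <= Defs.maxA f.
Proof.
rewrite /Defs.maxA; case: pickP => [a1 _|h]; last by have := h a.
exact: le_bigmax.
Qed.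

Lemma maxA_argmax (f : A -> R) (a0 : A) : Defs.maxA f = f [arg max_(a > a0) f a]%O.
Proof.
case: arg_maxP => // a _ ha; apply/eqP; rewrite eq_le maxA_ge andbT.
rewrite /Defs.maxA; case: pickP => [a1 _|h]; last by have := h a0.
by apply: bigmax_le => [|b _]; apply: ha.
Qed.

End FiniteMax.

Section Distributions.
Variables (R : realType) (T : finType).

Lemma distr_pos_witness (p : T -> R) : is_distr p -> exists x, 0 < p x.
Proof.
move=> [p0 p1]; apply: contrapT => /forallNP hn.
have : \sum_x p x = 0.
  by apply: big1 => x _; apply/eqP; rewrite eq_le p0 andbT leNgt; apply/negP/hn.
by rewrite p1 => /eqP; rewrite oner_eq0.
Qed.

Lemma distr_mean_eq_max (p E : T -> R) M :
  is_distr p -> (forall x, E x <= M) -> M <= \sum_x p x * E x ->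
  forall x, 0 < p x -> E x = M.
Proof.
move=> [p0 p1] EM hM x px.
have gap_ge0 y : 0 <= p y * (M - E y) by rewrite mulr_ge0 // subr_ge0.
have gap0 : \sum_y p y * (M - E y) = 0.
  apply/eqP; rewrite eq_le sumr_ge0 // andbT.
  under eq_bigr do rewrite mulrBr.
  by rewrite sumrB -mulr_suml p1 mul1r subr_le0.
have /(_ x isT)/eqP := psumr_eq0P (fun y _ => gap_ge0 y) gap0.
by rewrite mulf_eq0 gt_eqF //= subr_eq0 => /eqP ->.
Qed.

End Distributions.

Section ELPTheory.
Variables (R : realType) (S A : finType) (P : S -> A -> S -> R) (Rw : S -> R)
  (rho : S -> R) (Sbot : {set S}).
Hypothesis hELP : is_ELP P rho Sbot.

Let P_distr s a : is_distr (P s a). Proof. by case: hELP => _ []. Qed.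
Let P_ge0 s a s' : 0 <= P s a s'. Proof. by case: (P_distr s a). Qed.
Let P_sum1 s a : \sum_s' P s a s' = 1. Proof. by case: (P_distr s a). Qed.
Let rho_ge0 s : 0 <= rho s. Proof. by case: hELP => _ [_ []]. Qed.

Lemma dist_ge0 pi : is_policy pi -> forall n s, 0 <= Defs.dist P rho Sbot pi n s.
Proof.
move=> hpi; elim=> [|n IH] s //=.
apply: sumr_ge0 => x _; rewrite mulr_ge0 //; apply: sumr_ge0 => a _.
by rewrite mulr_ge0 //; case: (hpi x).
Qed.

Lemma survival_cvg0 pi :
  is_policy pi -> (Defs.survival P rho Sbot pi n @[n --> \oo] --> 0)%classic.
Proof. by case: hELP => _ _ hfin _ _ /hfin/cvg_series_cvg_0. Qed.

Section ClosedNonterminalSet.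
Variables (Y : {set S}) (mu : S -> A).
Hypothesis Y_nonterminal : forall s, s \in Y -> s \notin Sbot.
Hypothesis Y_closed : forall s s', s \in Y -> 0 < P s (mu s) s' -> s' \in Y.

Let Y_mass_stays s : s \in Y -> \sum_(s' in Y) P s (mu s) s' = 1.
Proof.
move=> sY; rewrite -(P_sum1 s (mu s)) [RHS](bigID (mem Y)) /= [X in _ = _ + X]big1 ?addr0 //.
move=> s' s'Y; apply/eqP; rewrite eq_le P_ge0 andbT leNgt.
by apply: contra s'Y; apply: Y_closed.
Qed.

Definition follow_on (pi0 : S -> A -> R) : S -> A -> R :=
  fun s b => if s \in Y then (b == mu s)%:R else pi0 s b.

Lemma follow_on_policy pi0 : is_policy pi0 -> is_policy (follow_on pi0).
Proof.
move=> hpi0 s; rewrite /follow_on; case: (s \in Y); last exact: hpi0.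
split=> [b|]; first by rewrite ler0n.
by rewrite (bigD1 (mu s)) //= eqxx big1 ?addr0 // => b /negbTE ->.
Qed.

Lemma follow_on_step pi0 s s' : s \in Y ->
  \sum_b follow_on pi0 s b * P s b s' = P s (mu s) s'.
Proof.
move=> sY; rewrite /follow_on sY (bigD1 (mu s)) //= eqxx mul1r big1 ?addr0 //.
by move=> b /negbTE ->; rewrite mul0r.
Qed.

Lemma mass_on_closed_nondecreasing pi0 : is_policy pi0 ->
  {homo (fun k => \sum_(s in Y) Defs.dist P rho Sbot (follow_on pi0) k s) :
     m n / (m <= n)%N >-> m <= n}.
Proof.
move=> hpi0; apply: homo_leq => [x|y x z|k]; [exact: lexx|exact: le_trans|].
have hpi := follow_on_policy hpi0; rewrite /=.
under [X in X <= _]eq_bigr => s sY.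
  rewrite -[_ k s]mulr1 -(Y_mass_stays sY) mulr_sumr; over.
rewrite exchange_big /=; apply: ler_sum => s' _.
rewrite [X in _ <= X](bigID (fun s => s \in Y)) /= -[X in X <= _]addr0.
apply: lerD; last first.
  apply: sumr_ge0 => s _; rewrite mulr_ge0 ?dist_ge0 //.
  by apply: sumr_ge0 => b _; rewrite mulr_ge0 //; case: (hpi s).
rewrite [X in _ <= X](eq_bigl (fun s => s \in Y)) => [|s]; last first.
  by apply/idP/idP => [/andP[]//|sY]; rewrite Y_nonterminal.
by under [X in _ <= X]eq_bigr => s sY do rewrite follow_on_step //.
Qed.

Lemma dist_follow_on_unreached pi0 :
  (forall k s, s \in Y -> Defs.dist P rho Sbot (follow_on pi0) k s = 0) ->
  forall k s, Defs.dist P rho Sbot pi0 k s = Defs.dist P rho Sbot (follow_on pi0) k s.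
Proof.
move=> unreached; elim=> [|k IH] s //=; apply: eq_bigr => s1 _; rewrite IH.
have [s1Y|s1Y] := boolP (s1 \in Y); first by rewrite unreached // !mul0r.
by rewrite /follow_on (negbTE s1Y).
Qed.

Lemma closed_nonterminal_empty s0 : s0 \notin Y.
Proof.
apply/negP => s0Y.
case: hELP => _ _ _ _ /(_ s0) [pi0 [hpi0 [n0 reached]]].
have hpi := follow_on_policy hpi0.
pose x k := \sum_(s in Y) Defs.dist P rho Sbot (follow_on pi0) k s.
have x_ge0 k : 0 <= x k by apply: sumr_ge0 => *; apply: dist_ge0.
have [N xN] : exists N, 0 < x N.
  apply: contrapT => /forallNP hn.
  have x0 k s1 : s1 \in Y -> Defs.dist P rho Sbot (follow_on pi0) k s1 = 0.
    move=> sY; apply: (psumr_eq0P (P := fun s => s \in Y)) sY => [s _|].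
      exact: dist_ge0.
    by apply/eqP; rewrite eq_le -/(x k) x_ge0 andbT leNgt; apply/negP/hn.
  by move: reached; rewrite dist_follow_on_unreached // x0 // ltxx.
have x_le_survival k : x k <= Defs.survival P rho Sbot (follow_on pi0) k.
  rewrite [X in _ <= X](bigID (mem Y)) /= lerDl.
  by apply: sumr_ge0 => *; apply: dist_ge0.
have [n1 _ small] := cvgr_lt _ (survival_cvg0 hpi) (x N) xN.
have := small _ (leq_maxl n1 N).
apply/negP; rewrite -leNgt; apply: le_trans (x_le_survival _).
exact: mass_on_closed_nondecreasing (leq_maxr n1 N).
Qed.

End ClosedNonterminalSet.

Lemma bellman_subr_le (Q1 Q2 : S -> A -> R) (mu : S -> A) s a :
  (forall s', Defs.maxA (Q1 s') = Q1 s' (mu s')) ->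
  bellman P Rw Sbot Q1 s a - bellman P Rw Sbot Q2 s a <=
  \sum_s' P s a s' * (gamma_epi R Sbot s' * (Q1 s' (mu s') - Q2 s' (mu s'))).
Proof.
move=> greedy; rewrite /bellman -sumrB; apply: ler_sum => s' _.
rewrite -mulrBr ler_wpM2l // opprD addrACA subrr add0r -mulrBr /gamma_epi.
by case: ifP => _; rewrite ?mul0r // !mul1r greedy lerB ?maxA_ge.
Qed.

Section SuperFixpoint.
Variables (Qstar Q : S -> A -> R).
Hypothesis Qstar_fix : bellman P Rw Sbot Qstar = Qstar.
Hypothesis Q_super : forall s a, bellman P Rw Sbot Q s a <= Q s a.

Lemma fixpoint_le_superfixpoint s a : Qstar s a <= Q s a.
Proof.
pose D (x : S * A) := Qstar x.1 x.2 - Q x.1 x.2.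
pose xm := [arg max_(x > (s, a)) D x]%O.
pose M := D xm.
have D_le_M x : D x <= M.
  by rewrite /M /xm; case: (@arg_maxP _ _ _ (s, a) predT D) => // y _; apply.
rewrite -subr_le0; apply: le_trans (D_le_M (s, a)) _; rewrite leNgt; apply/negP => M_gt0.
pose mu s' := [arg max_(b > a) Qstar s' b]%O.
pose E s' := gamma_epi R Sbot s' * D (s', mu s').
have D_le_mean s1 a1 : D (s1, a1) <= \sum_s' P s1 a1 s' * E s'.
  rewrite /D /= -{1}Qstar_fix; apply: le_trans (lerB (lexx _) (Q_super s1 a1)) _.
  by apply: bellman_subr_le => s'; apply: maxA_argmax.
have E_le_M s' : E s' <= M.
  by rewrite /E /gamma_epi; case: ifP => _; [rewrite mul0r ltW | rewrite mul1r].
pose Y := [set s' | E s' == M].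
have Y_nonterminal s' : s' \in Y -> s' \notin Sbot.
  by rewrite inE /E /gamma_epi; case: ifP; rewrite // mul0r eq_sym gt_eqF.
have Y_closed s1 s' : s1 \in Y -> 0 < P s1 (mu s1) s' -> s' \in Y.
  move=> s1Y Ps'; rewrite inE; apply/eqP/(distr_mean_eq_max (P_distr s1 (mu s1))) => //.
  have E_s1 : E s1 = D (s1, mu s1).
    by rewrite /E /gamma_epi (negbTE (Y_nonterminal _ s1Y)) mul1r.
  by move: s1Y; rewrite inE E_s1 => /eqP <-; apply: D_le_mean.
have [s' hs'] := distr_pos_witness (P_distr xm.1 xm.2).
have : s' \in Y.
  rewrite inE; apply/eqP/(distr_mean_eq_max (P_distr xm.1 xm.2)) => //.
  by rewrite /M [X in D X]surjective_pairing D_le_mean.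
by rewrite (negbTE (closed_nonterminal_empty Y_nonterminal Y_closed s')).
Qed.

End SuperFixpoint.

Lemma hitting_prob_ge0 pi : is_policy pi -> forall s, 0 <= hitting_prob P rho Sbot pi s.
Proof.
move=> hpi s; rewrite /hitting_prob; case: ifP => // _.
have hd := dist_ge0 hpi.
have hfin : finite_expected_T P rho Sbot pi by case: hELP => _ _ /(_ _ hpi).
have survival_bound := nondecreasing_cvgn_le
  (nondecreasing_series (fun n _ _ => sumr_ge0 _ (fun s _ => hd n s))) hfin.
have cvg_s : (cvgn (series (fun n => Defs.dist P rho Sbot pi n s)))%classic.
  apply: nondecreasing_is_cvgn; first exact: nondecreasing_series.
  exists (limn (series (Defs.survival P rho Sbot pi))) => _ [n _ <-].
  apply: le_trans (survival_bound n); apply: ler_sum => k _.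
  by rewrite /survival (bigD1 s) //= lerDl sumr_ge0.
apply: limr_ge cvg_s _; apply: nearW => n.
by apply: sumr_ge0 => *; apply: hd.
Qed.

Lemma EQT_le pi (Q1 Q2 : S -> A -> R) : is_policy pi ->
  (forall s a, Q1 s a <= Q2 s a) -> EQT P rho Sbot pi Q1 <= EQT P rho Sbot pi Q2.
Proof.
move=> hpi hQ; apply: ler_sum => s _; rewrite ler_wpM2l ?hitting_prob_ge0 //.
by apply: ler_sum => a _; rewrite ler_wpM2l //; case: (hpi s).
Qed.

End ELPTheory.

Section Lagrangian.
Variables (R : realType) (S A : finType) (P : S -> A -> S -> R) (Rw : S -> R)
  (rho : S -> R) (Sbot : {set S}) (pi : S -> A -> R).

Local Notation L := (lagrangian P Rw rho Sbot pi).
Local Notation B := (bellman P Rw Sbot).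

Lemma lagrangian_le_maxLag Q lam : (forall s a, 0 <= lam s a) ->
  ((L Q lam)%:E <= maxLag P Rw rho Sbot pi Q)%E.
Proof. by move=> lam_ge0; apply: ereal_sup_ubound; exists lam. Qed.

Lemma lagrangian0 Q : L Q (fun _ _ => 0) = EQT P rho Sbot pi Q.
Proof. by rewrite /lagrangian big1 ?addr0 // => s _; apply: big1 => a _; rewrite mul0r. Qed.

Lemma EQT_le_maxLag Q : ((EQT P rho Sbot pi Q)%:E <= maxLag P Rw rho Sbot pi Q)%E.
Proof. by rewrite -lagrangian0; apply: lagrangian_le_maxLag. Qed.

Lemma lagrangian_point Q s a t :
  L Q (fun s' a' => if (s' == s) && (a' == a) then t else 0) =
  EQT P rho Sbot pi Q + t * (B Q s a - Q s a).
Proof.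
rewrite /lagrangian (bigD1 s) //= [X in _ + (_ + X)]big1 ?addr0; last first.
  by move=> s' /negbTE hs'; apply: big1 => a' _; rewrite hs' mul0r.
rewrite (bigD1 a) //= !eqxx [X in _ + (_ + X)]big1 ?addr0 //.
by move=> a' /negbTE ha'; rewrite ha' mul0r.
Qed.

Lemma maxLag_fixpoint Q : B Q = Q -> maxLag P Rw rho Sbot pi Q = (EQT P rho Sbot pi Q)%:E.
Proof.
move=> Qfix; apply/eqP; rewrite eq_le; apply/andP; split.
- apply: ge_ereal_sup => _ [lam _ <-]; rewrite lee_fin /lagrangian big1 ?addr0 // => s _.
  by apply: big1 => a _; rewrite Qfix subrr mulr0.
- exact: EQT_le_maxLag.
Qed.

Lemma maxLag_infeasible Q s a : Q s a < B Q s a -> maxLag P Rw rho Sbot pi Q = +oo%E.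
Proof.
rewrite -subr_gt0 => d_gt0.
have unbounded c : (c%:E <= maxLag P Rw rho Sbot pi Q)%E.
  pose t := Num.max 0 ((c - EQT P rho Sbot pi Q) / (B Q s a - Q s a)).
  pose lam s' a' := if (s' == s) && (a' == a) then t else 0.
  have lam_ge0 s' a' : 0 <= lam s' a' by rewrite /lam; case: ifP; rewrite ?le_max lexx.
  apply: le_trans (lagrangian_le_maxLag Q lam_ge0).
  by rewrite lagrangian_point lee_fin -lerBlDl -ler_pdivrMr // le_max lexx orbT.
move: unbounded; case: (maxLag _ _ _ _ _ _) => [r||] unbounded //.
- by have := unbounded (r + 1); rewrite lee_fin gerDl ler10.
- by have := unbounded 0.
Qed.

End Lagrangian.

Theorem mainTheorem4 (R : realType) (S A : finType)
  (P : S -> A -> S -> R) (Rw : S -> R) (rho : S -> R) (Sbot : {set S})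
  (Qstar : S -> A -> R) (pi : S -> A -> R) :
  is_ELP P rho Sbot ->
  bellman P Rw Sbot Qstar = Qstar ->
  is_policy pi ->
  (* Q* in argmin_Q max_{lambda >= 0} L_pi(Q, lambda) *)
  (forall Q : S -> A -> R,
      (maxLag P Rw rho Sbot pi Qstar <= maxLag P Rw rho Sbot pi Q)%E) /\
  (* equivalently: Q* solves  min E_pi[Q(S_T,A_T)]  s.t.  Q >= B Q *)
  ((forall s a, bellman P Rw Sbot Qstar s a <= Qstar s a) /\
   (forall Q : S -> A -> R, (forall s a, bellman P Rw Sbot Q s a <= Q s a) ->
      EQT P rho Sbot pi Qstar <= EQT P rho Sbot pi Q)).
Proof.
move=> hELP Qstar_fix hpi.
have Qstar_optimal Q : (forall s a, bellman P Rw Sbot Q s a <= Q s a) ->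
    EQT P rho Sbot pi Qstar <= EQT P rho Sbot pi Q.
  move=> Q_super; apply: (EQT_le hELP hpi) => s a.
  exact: (fixpoint_le_superfixpoint hELP Qstar_fix Q_super).
split; last by split=> // s a; rewrite Qstar_fix.
move=> Q; rewrite maxLag_fixpoint //.
have [Q_super|/existsNP[s /existsNP[a]]] :=
  pselect (forall s a, bellman P Rw Sbot Q s a <= Q s a).
- by apply: le_trans (EQT_le_maxLag _ _ _ _ _ Q); rewrite lee_fin Qstar_optimal.
- by move/negP; rewrite -ltNge => /(maxLag_infeasible rho pi) ->; apply: leey.
Qed.
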